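(* Let $\vec{\Phi}_1,\vec{\Phi}_2\in\mathbb{R}^2$ be unit vectors with $\vec{\Phi}_1\cdot\vec{\Phi}_2=1/2$, let $\vec{\phi}_1=-(\vec{\Phi}_1+\vec{\Phi}_2)/3$, and let $\mathbb{E}_1=\{n\vec{\Phi}_1+m\vec{\Phi}_2+\vec{\phi}_1 \mid n,m\in\mathbb{Z}\}$. For $\vec{\lambda}\in\mathbb{R}^2$ put $N(\vec{\lambda})=\vec{\lambda}\cdot\vec{\lambda}$. Let $L>0$. Then there are exactly $3$ distinct vectors $\vec{\lambda}\in\mathbb{E}_1$ with $\sqrt{N(\vec{\lambda})}=L$ if and only if $L=3^{-1/2}\prod_j m_j^{\mu_j}$, a finite product with exponents $\mu_j\in\mathbb{N}$ and primes $m_j\equiv 2\pmod{3}$.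
   Context: $\mathbb{E}_1$ is the triangular lattice spanned by $\vec{\Phi}_1,\vec{\Phi}_2$ (angle $60^\circ$) translated by $\vec{\phi}_1$; $N$ is the squared Euclidean norm. *)

From HB Require Import structures.
From mathcomp Require Import all_boot all_order all_algebra.
From mathcomp Require Import reals.
Set Implicit Arguments. Unset Strict Implicit. Unset Printing Implicit Defensive.
Import Order.TTheory GRing.Theory Num.Theory.
Local Open Scope ring_scope.

Section Vec.
Variable R : realType.

Definition vadd (u v : R * R) : R * R := (u.1 + v.1, u.2 + v.2).
Definition vscale (a : R) (u : R * R) : R * R := (a * u.1, a * u.2).
Definition dot (u v : R * R) : R := u.1 * v.1 + u.2 * v.2.
Definition Nsq (u : R * R) : R := dot u u.

Definition phi1 (P1 P2 : R * R) : R * R := vscale (- (1 / 3)) (vadd P1 P2).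

Definition inE1 (P1 P2 : R * R) (x : R * R) : Prop :=
  exists n m : int,
    x = vadd (vadd (vscale (n%:~R) P1) (vscale (m%:~R) P2)) (phi1 P1 P2).
End Vec.

From HB Require Import structures.
From mathcomp Require Import all_boot all_order all_algebra fingroup pgroup finfield.
From mathcomp Require Import reals zify ring lra.
Set Implicit Arguments. Unset Strict Implicit. Unset Printing Implicit Defensive.
Import Order.TTheory GRing.Theory Num.Theory.
Local Open Scope ring_scope.

(* Writing the points of E1 as (a Phi1 + b Phi2) / 3 with a, b = 2 (mod 3), the
   circle of radius L meets E1 in the solutions of a^2 + a b + b^2 = 9 L^2, i.e.
   in elements a + b zeta of Z[zeta], zeta = e^(i pi / 3), of norm 9 L^2 in a
   fixed residue class.  Rotation by 2 pi / 3 and the reflection b + a zeta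
   preserve both, so there are at least six solutions unless every solution lies
   on a mirror line, where 9 L^2 = 3 c^2 and exactly three solutions remain.
   A prime p = 1 mod 3 dividing c splits, p = N(u + v zeta), and twisting by
   (u + v zeta)^2 produces a solution off the mirrors; primes p = 2 mod 3 are
   inert, so by descent on c all solutions of norm 3 c^2 lie on the mirrors. *)

(** * The Eisenstein norm *)

(* The pair (a, b) stands for a + b zeta in Z[zeta], zeta = e^(i pi / 3): then
   eis_norm is the norm, (x - y, x + 2 y) is (1 + zeta) (x + y zeta) and
   (u^2 - v^2, 2 u v + v^2) is (u + v zeta)^2. *)
Definition eis_norm (a b : int) : int := a * a + a * b + b * b.

Lemma eis_norm_intr (K : nzRingType) (a b : int) :
  (eis_norm a b)%:~R = a%:~R * a%:~R + a%:~R * b%:~R + b%:~R * b%:~R :> K.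
Proof. by rewrite /eis_norm !intrD !intrM. Qed.

Lemma eis_normZ (k a b : int) : eis_norm (a * k) (b * k) = eis_norm a b * (k * k).
Proof. by rewrite /eis_norm; ring. Qed.

Lemma eis_norm_mul3 (x y : int) : eis_norm (x - y) (x + 2 * y) = 3 * eis_norm x y.
Proof. by rewrite /eis_norm; ring. Qed.

Lemma eis_norm_sqr (u v : int) :
  eis_norm (u * u - v * v) (2 * u * v + v * v) = eis_norm u v ^+ 2.
Proof. by rewrite /eis_norm; ring. Qed.

Lemma eis_norm_gt0 (a b : int) : (a != 0) || (b != 0) -> 0 < eis_norm a b.
Proof.
have : 4 * eis_norm a b = (2 * a + b) ^+ 2 + 3 * b ^+ 2 by rewrite /eis_norm; ring.
by move=> norm4 /orP [] ab_neq0; nia.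
Qed.

(** * Primes congruent to 2 and to 1 modulo 3 *)

Lemma finField_2mod3_three_neq0 (K : finFieldType) :
  (#|K| %% 3 = 2)%N -> (3%:R : K) != 0.
Proof.
move=> K_mod3; apply/negP => /eqP K3.
have K_pchar3 : (3 \in [pchar K])%N by rewrite inE K3 eqxx.
move: K_mod3; rewrite [#|K|](card_pprimeChar K_pchar3).
by case: logn => [|k]; rewrite ?expnS ?modnMr.
Qed.

(* In a field of order 2 mod 3 there is no primitive cube root of unity
   t = x / y, since t ^+ #|K| = t forces t ^+ 2 = t. *)
Lemma finField_eis_form_eq0 (K : finFieldType) (x y : K) :
  (#|K| %% 3 = 2)%N -> x * x + x * y + y * y = 0 -> x = 0 /\ y = 0.
Proof.
move=> K_mod3 xy0; have K3 := finField_2mod3_three_neq0 K_mod3.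
have [y0 | y_neq0] := eqVneq y 0.
  by move/eqP: xy0; rewrite y0 !mulr0 !addr0 mulf_eq0 orbb => /eqP.
pose t := x / y.
have t_root : t * t + t + 1 = 0.
  by rewrite -[RHS](mul0r (y * y)^-1) -xy0 /t; field.
have t3 : t ^+ 3 = 1.
  apply/eqP; rewrite -subr_eq0; apply/eqP.
  by transitivity ((t - 1) * (t * t + t + 1)); [ring | rewrite t_root mulr0].
have t2 : t ^+ 2 = t.
  by rewrite -{2}(expf_card t) (divn_eq #|K| 3) K_mod3 exprD mulnC exprM t3 expr1n mul1r.
have /eqP : t * (t - 1) = 0 by rewrite mulrBr mulr1 -expr2 t2 subrr.
rewrite mulf_eq0 subr_eq0 => /orP [] /eqP t_val; move: t_root; rewrite t_val.
  by rewrite !mul0r !add0r => /eqP; rewrite oner_eq0.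
by move=> three0; exfalso; move/eqP: K3; apply; rewrite -three0; ring.
Qed.

Lemma prime_2mod3_dvd_eis_norm (p : nat) (a b : int) : prime p -> (p %% 3 = 2)%N ->
  (p%:Z %| eis_norm a b)%Z -> (p%:Z %| a)%Z /\ (p%:Z %| b)%Z.
Proof.
move=> p_prime p_mod3; have p_pchar := pchar_Fp p_prime.
have Fp_mod3 : (#|'F_p| %% 3 = 2)%N by rewrite card_Fp.
rewrite !(dvdz_pcharf p_pchar) eis_norm_intr => /eqP ab0.
by have [-> ->] := finField_eis_form_eq0 Fp_mod3 ab0; rewrite eqxx.
Qed.

Lemma Fp_cube_root_unity (p : nat) : prime p -> (p %% 3 = 1)%N ->
  exists t : 'F_p, t * t + t + 1 = 0.
Proof.
move=> p_prime p_mod3.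
have three_dvd : (3 %| #|[set: {unit 'F_p}]|)%N.
  rewrite card_finField_unit card_Fp //; apply/dvdnP; exists (p %/ 3)%N.
  by have := prime_gt1 p_prime; lia.
have [u _ u_order] := Cauchy (isT : prime 3) three_dvd.
have u3 : val u ^+ 3 = 1 by rewrite -FinRing.val_unitX -u_order expg_order.
have u_neq1 : val u != 1.
  apply: contra_neq (_ : #[u]%g != 1%N) => [u1|]; last by rewrite u_order.
  by rewrite (_ : u = 1%g) ?order1 //; apply: val_inj.
exists (val u); apply/eqP.
have : (val u - 1) * (val u * val u + val u + 1) == 0.
  by apply/eqP; rewrite -[RHS](subrr 1) -[X in _ = X - 1]u3; ring.
by rewrite mulf_eq0 subr_eq0 (negbTE u_neq1).
Qed.

Lemma prime_neq_sqr (p n : nat) : prime p -> p != (n * n)%N.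
Proof.
move=> p_prime; apply/eqP => p_sqr; move: p_prime; rewrite p_sqr.
case/primeP => nn_gt1 /(_ n (dvdn_mulr _ (dvdnn n))) /orP [] /eqP; nia.
Qed.

Lemma nat_sqrt_bracket (n : nat) : exists s, (s * s <= n < s.+1 * s.+1)%N.
Proof.
elim: n => [|n [s /andP [s_le n_lt]]]; first by exists 0%N.
have [n1_lt | n1_ge] := ltnP n.+1 (s.+1 * s.+1).
  by exists s; rewrite n1_lt; lia.
by exists s.+1; apply/andP; split; nia.
Qed.

(* Thue's lemma: by pigeonhole two of the (s+1)^2 > p values i - t j collide,
   giving x = t y in 'F_p with |x|, |y| <= s < sqrt p. *)
Lemma Fp_eis_norm_small_multiple (p : nat) (t : 'F_p) :
  prime p -> t * t + t + 1 = 0 ->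
  exists x y : int, [/\ (x != 0) || (y != 0), eis_norm x y < 3 * p%:Z
                      & (p%:Z %| eis_norm x y)%Z].
Proof.
move=> p_prime t_root.
have [s /andP [s_le p_lt]] := nat_sqrt_bracket p.
have s_lt : (s * s < p)%N by rewrite ltn_neqAle eq_sym prime_neq_sqr.
pose g (ij : 'I_s.+1 * 'I_s.+1) : 'F_p := ij.1%:R - t * ij.2%:R.
have /injectivePn [[i j] [[i' j'] ij_neq g_eq]] : ~~ injectiveb g.
  apply: contraL p_lt => /injectiveP/leq_card.
  by rewrite card_prod !card_ord Fp_cast // -leqNgt.
exists (i%:Z - i'%:Z), (j%:Z - j'%:Z); split.
- apply: contraR ij_neq; rewrite negb_or !negbK !subr_eq0.
  case/andP=> /eqP [ii'] /eqP [jj'].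
  by rewrite (val_inj ii') (val_inj jj').
- have := ltn_ord i; have := ltn_ord i'; have := ltn_ord j; have := ltn_ord j'.
  rewrite /eis_norm; nia.
- rewrite (dvdz_pcharf (pchar_Fp p_prime)) eis_norm_intr.
  have -> : (i%:Z - i'%:Z)%:~R = t * (j%:Z - j'%:Z)%:~R :> 'F_p.
    apply/eqP; rewrite -subr_eq0 -[X in _ == X](subrr (g (i, j))) {2}g_eq.
    by rewrite /g /= !intrB -!pmulrn; apply/eqP; ring.
  set y := (_ - _)%:~R; apply/eqP.
  by transitivity ((t * t + t + 1) * (y * y)); [ring | rewrite t_root mul0r].
Qed.

Lemma prime_1mod3_eis_norm (p : nat) : prime p -> (p %% 3 = 1)%N ->
  exists u v : int, eis_norm u v = p%:Z.
Proof.
move=> p_prime p_mod3; have p_gt1 := prime_gt1 p_prime.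
have [t t_root] := Fp_cube_root_unity p_prime p_mod3.
have [x [y [xy_neq0 xy_lt /dvdzP [k xy_k]]]] := Fp_eis_norm_small_multiple p_prime t_root.
have := eis_norm_gt0 xy_neq0; rewrite xy_k => xy_gt0.
have [k1 | k2] : k = 1 \/ k = 2 by nia.
  by exists x, y; rewrite xy_k k1 mul1r.
have two_dvd : (2%:Z %| eis_norm x y)%Z by rewrite xy_k k2 dvdz_mulr.
have [/dvdzP [x' x_eq] /dvdzP [y' y_eq]] :=
  prime_2mod3_dvd_eis_norm (isT : prime 2) erefl two_dvd.
move: xy_k; rewrite x_eq y_eq k2 /eis_norm => xy_k.
have : (2 %| p)%N by apply/dvdnP; exists (`|eis_norm x' y'|)%N; rewrite /eis_norm; lia.
by rewrite dvdn_prime2 // => /eqP p2; rewrite -p2 in p_mod3.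
Qed.

Definition mod3_eq2 : nat_pred := [pred p | (p %% 3 == 2)%N].

Lemma exists_pfactor_seq_2mod3 (R : nzSemiRingType) (P : R -> Prop) :
  (exists s : seq (nat * nat),
      (forall pe, pe \in s -> prime pe.1 /\ pe.1 %% 3 = 2)%N /\
      P (\prod_(pe <- s) pe.1%:R ^+ pe.2))
  <-> exists2 n, mod3_eq2.-nat n & P n%:R.
Proof.
have natr_prod_pfactor (s : seq (nat * nat)) :
    \prod_(pe <- s) pe.1%:R ^+ pe.2 = (\prod_(pe <- s) pe.1 ^ pe.2)%:R :> R.
  by rewrite natr_prod; apply: eq_bigr => pe _; rewrite natrX.
split=> [[s [s_2mod3 Ps]] | [n n_pnat Pn]].
  exists (\prod_(pe <- s) pe.1 ^ pe.2)%N; last by rewrite -natr_prod_pfactor.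
  rewrite big_seq; apply: (big_ind (fun m => mod3_eq2.-nat m)) => [//|m1 m2|pe pe_s].
    by rewrite pnatM => ->.
  have [pe_prime pe_mod3] := s_2mod3 pe pe_s.
  by rewrite pnatX pnatE // inE pe_mod3.
exists (prime_decomp n); split; last first.
  by rewrite natr_prod_pfactor -prod_prime_decomp //; case/andP: n_pnat.
move=> [p e] pe_n; have [p_prime _ _] := mem_prime_decomp pe_n; split=> //.
by apply/eqP; apply: (pnatPpi n_pnat); apply: (map_f fst pe_n).
Qed.

Lemma mod3_eq2_pnat_signed (n : nat) : mod3_eq2.-nat n ->
  exists c : int, (c %% 3)%Z = 2 /\ `|c|%N = n.
Proof.
move=> n_pnat; have n_ndvd3 : ~~ (3 %| n)%N.
  apply/negP => three_dvd; suff : 3 \in mod3_eq2 by [].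
  apply: (pnatPpi n_pnat).
  by rewrite mem_primes three_dvd andbT; case/andP: n_pnat.
have [n_mod3 | n_mod3] : (n %% 3 = 1 \/ n %% 3 = 2)%N by lia.
  by exists (- n%:Z); split; lia.
by exists n%:Z; split; lia.
Qed.

(** * Representations on the mirror lines *)

(* The six reflection axes of the lattice Z[zeta]: on_axis is the union of the
   lines through the units, on_mirror that of the lines through the multiples
   of 1 + zeta. *)
Definition on_axis (v : int * int) : bool :=
  [|| v.1 == 0, v.2 == 0 | v.1 + v.2 == 0].

Definition on_mirror (v : int * int) : bool :=
  [|| v.1 == v.2, v.2 == -2 * v.1 | v.1 == -2 * v.2].

Definition mirror_reps (c : int) : seq (int * int) :=
  [:: (c, c); (c, -2 * c); (-2 * c, c)].

Lemma on_mirror_mul3 (x y : int) : on_mirror (x - y, x + 2 * y) = on_axis (x, y).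
Proof.
by rewrite /on_mirror /on_axis /= orbCA; congr [|| _, _ | _]; apply/eqP/eqP; lia.
Qed.

Lemma on_axis_sqr (u v : int) :
  on_axis (u * u - v * v, 2 * u * v + v * v) -> on_axis (u, v) || on_mirror (u, v).
Proof.
rewrite /on_axis /on_mirror /= !mulNr; case/or3P.
- rewrite (_ : u * u - v * v = (u + v) * (u - v)); last by ring.
  by rewrite mulf_eq0 subr_eq0 => /orP [] ->; rewrite ?orbT.
- rewrite (_ : 2 * u * v + v * v = v * (v + 2 * u)); last by ring.
  by rewrite mulf_eq0 addr_eq0 => /orP [] ->; rewrite ?orbT.
- rewrite (_ : _ + (2 * u * v + v * v) = u * (u + 2 * v)); last by ring.
  by rewrite mulf_eq0 addr_eq0 => /orP [] ->; rewrite ?orbT.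
Qed.

Lemma on_mirrorZ (k a b : int) : k != 0 -> on_mirror (a * k, b * k) = on_mirror (a, b).
Proof. by move=> k_neq0; rewrite /on_mirror /= !mulrA !(inj_eq (mulIf k_neq0)). Qed.

Lemma on_axis_eis_norm (v : int * int) : on_axis v -> exists n, eis_norm v.1 v.2 = n * n.
Proof.
case: v => a b /or3P [] /eqP /= ab0; rewrite /eis_norm.
- by exists b; rewrite ab0; ring.
- by exists a; rewrite ab0; ring.
- by exists b; rewrite (_ : a = - b); [ring | lia].
Qed.

Lemma on_mirror_reps (v : int * int) : on_mirror v -> exists c, v \in mirror_reps c.
Proof.
case: v => a b /or3P [] /eqP /= ->.
- by exists b; rewrite inE eqxx.
- by exists a; rewrite !inE eqxx orbT.
- by exists b; rewrite !inE eqxx !orbT.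
Qed.

Lemma mirror_reps_eis_norm (c : int) (v : int * int) :
  v \in mirror_reps c -> eis_norm v.1 v.2 = 3 * (c * c).
Proof. by rewrite !inE => /or3P [] /eqP -> /=; rewrite /eis_norm; ring. Qed.

Lemma mirror_reps_mod3 (c : int) (v : int * int) :
  v \in mirror_reps c -> (v.1 %% 3 = c %% 3)%Z /\ (v.2 %% 3 = c %% 3)%Z.
Proof. by rewrite !inE => /or3P [] /eqP -> /=; split; lia. Qed.

Lemma eis_norm_eq3_on_mirror (a b : int) : eis_norm a b = 3 -> on_mirror (a, b).
Proof.
rewrite /eis_norm /on_mirror /= => ab3.
have a_range : a = -2 \/ a = -1 \/ a = 0 \/ a = 1 \/ a = 2 by nia.
have b_range : b = -2 \/ b = -1 \/ b = 0 \/ b = 1 \/ b = 2 by nia.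
by move: ab3; case: a_range => [|[|[|[|]]]] ->; case: b_range => [|[|[|[|]]]] ->.
Qed.

(* Every prime factor of n is inert in Z[zeta], so a representation of 3 n^2
   is p times a representation of 3 (n/p)^2, down to the six units times 1 + zeta. *)
Lemma eis_norm_3sqr_on_mirror (n : nat) (a b : int) : mod3_eq2.-nat n ->
  eis_norm a b = 3 * (n%:Z * n%:Z) -> on_mirror (a, b).
Proof.
elim/ltn_ind: n a b => n IHn a b n_pnat ab_norm.
have [n_le1 | n_gt1] := leqP n 1.
  have n1 : n = 1%N by case/andP: n_pnat; lia.
  by apply: eis_norm_eq3_on_mirror; rewrite ab_norm n1.
have p_prime := pdiv_prime n_gt1; set p := pdiv n in p_prime *.
have p_mod3 : (p %% 3 = 2)%N by apply/eqP; apply: (pnatPpi n_pnat); rewrite pi_pdiv.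
have [m n_eq] := dvdnP (pdiv_dvd n); rewrite -/p in n_eq.
have p_dvd : (p%:Z %| eis_norm a b)%Z.
  by rewrite ab_norm n_eq PoszM; apply/dvdzP; exists (3 * (m%:Z * m%:Z) * p%:Z); ring.
have [/dvdzP [a' a_eq] /dvdzP [b' b_eq]] :=
  prime_2mod3_dvd_eis_norm p_prime p_mod3 p_dvd.
have p_neq0 : p%:Z != 0 by rewrite eqz_nat -lt0n prime_gt0.
rewrite a_eq b_eq on_mirrorZ //; apply: (IHn m).
- by have := prime_gt1 p_prime; nia.
- by apply: pnat_dvd n_pnat; rewrite n_eq dvdn_mulr.
- apply: (mulIf (mulf_neq0 p_neq0 p_neq0)).
  by rewrite -eis_normZ -a_eq -b_eq ab_norm n_eq PoszM; ring.
Qed.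

(** * Counting representations *)

(* The residue condition is that of 3 E1 inside Z Phi1 + Z Phi2, see inE1P. *)
Definition eis_rep (M : int) (v : int * int) : bool :=
  [&& (v.1 %% 3)%Z == 2, (v.2 %% 3)%Z == 2 & eis_norm v.1 v.2 == M].

Lemma on_mirror_eis_rep (M : int) (v : int * int) : eis_rep M v -> on_mirror v ->
  exists c, [/\ (c %% 3)%Z = 2, M = 3 * (c * c) & v \in mirror_reps c].
Proof.
case/and3P=> /eqP v1_mod _ /eqP <- /on_mirror_reps [c v_c].
exists c; split=> //; last exact: mirror_reps_eis_norm.
by rewrite -v1_mod; case: (mirror_reps_mod3 v_c).
Qed.

Lemma mirror_reps_eis_rep (c : int) :
  (c %% 3)%Z = 2 -> {subset mirror_reps c <= eis_rep (3 * (c * c))}.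
Proof.
move=> c_mod v v_c; have [v1_mod v2_mod] := mirror_reps_mod3 v_c.
by rewrite unfold_in /eis_rep v1_mod v2_mod c_mod (mirror_reps_eis_norm v_c) !eqxx.
Qed.

Lemma eis_rep_3sqrE (c : int) : (c %% 3)%Z = 2 -> mod3_eq2.-nat `|c|%N ->
  forall v, eis_rep (3 * (c * c)) v = (v \in mirror_reps c).
Proof.
move=> c_mod c_pnat v; apply/idP/idP => [v_rep | /(mirror_reps_eis_rep c_mod)//].
have v_mirror : on_mirror v.
  case: v v_rep => a b /and3P [_ _ /eqP ab_norm].
  by apply: (eis_norm_3sqr_on_mirror c_pnat); rewrite ab_norm; nia.
have [c' [c'_mod cc' v_c']] := on_mirror_eis_rep v_rep v_mirror.
have /eqP : c ^+ 2 = c' ^+ 2 by rewrite !expr2; lia.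
by rewrite eqf_sqr => /orP [/eqP -> // | /eqP c_opp]; lia.
Qed.

Definition at_most_three_reps (M : int) : Prop :=
  forall s : seq (int * int), uniq s -> all (eis_rep M) s -> (size s <= 3)%N.

(* Off the mirrors, the rotation (a, b) |-> (b, - a - b) and the reflection
   (a, b) |-> (b, a) produce four distinct representations. *)
Lemma at_most_three_reps_on_mirror (M : int) (v : int * int) :
  at_most_three_reps M -> eis_rep M v -> on_mirror v.
Proof.
case: v => a b few ab_rep; apply: contraT; rewrite /on_mirror /= => ab_off.
case/and3P: ab_rep => /= /eqP a_mod /eqP b_mod /eqP ab_norm.
suff : (4 <= 3)%N by [].
apply: (few [:: (a, b); (b, - a - b); (- a - b, a); (b, a)]).
  by rewrite /= !inE !xpair_eqE; lia.
by rewrite /= /eis_rep /= -ab_norm /eis_norm !eqxx; lia.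
Qed.

Lemma prime_1mod3_eis_norm_off_lines (p : nat) (u v : int) :
  prime p -> (p %% 3 = 1)%N -> eis_norm u v = p%:Z ->
  ~~ on_axis (u, v) && ~~ on_mirror (u, v).
Proof.
move=> p_prime p_mod3 uv_norm; rewrite -negb_or; apply/negP => /orP [].
  case/on_axis_eis_norm=> n; rewrite uv_norm /= => p_sqr.
  by move/negP: (prime_neq_sqr `|n| p_prime); apply; apply/eqP; lia.
by case/on_mirror_reps=> c /mirror_reps_eis_norm; rewrite uv_norm => p_eq; lia.
Qed.

(* If p = N(u + v zeta) divides c, then (1 + zeta) (u + v zeta)^2 c / p is, up
   to sign, a representation of 3 c^2 off the mirrors. *)
Lemma eis_rep_3sqr_off_mirror (c : int) (p : nat) :
  (c %% 3)%Z = 2 -> prime p -> (p %% 3 = 1)%N -> (p %| `|c|)%N ->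
  exists2 w, eis_rep (3 * (c * c)) w & ~~ on_mirror w.
Proof.
move=> c_mod p_prime p_mod3 p_dvd.
have [d c_eq] : exists d, c = d * p%:Z by apply/dvdzP.
have [u [v uv_norm]] := prime_1mod3_eis_norm p_prime p_mod3.
set U := u * u - v * v; set V := 2 * u * v + v * v.
set x := (U - V) * d; set y := (U + 2 * V) * d.
have xy_norm : eis_norm x y = 3 * (c * c).
  by rewrite eis_normZ eis_norm_mul3 eis_norm_sqr uv_norm c_eq; ring.
have x_ndvd3 : ~~ (3 %| x)%Z.
  apply/negP => /dvdzP [r x_eq].
  have y_eq : y = (r + V * d) * 3 by rewrite mulrDl -x_eq /x /y; ring.
  by move: xy_norm; rewrite x_eq y_eq eis_normZ /eis_norm; nia.
have [e [e_sqr ex_mod ey_mod]] :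
    exists e : int, [/\ e * e = 1, ((x * e) %% 3)%Z = 2 & ((y * e) %% 3)%Z = 2].
  have y_eq : y = x + 3 * (V * d) by rewrite /x /y; ring.
  have [x_mod | x_mod] : (x %% 3 = 1)%Z \/ (x %% 3 = 2)%Z by lia.
    by exists (-1); split; rewrite ?y_eq; lia.
  by exists 1; split; rewrite ?y_eq; lia.
exists (x * e, y * e).
  by rewrite /eis_rep /= ex_mod ey_mod eis_normZ e_sqr mulr1 xy_norm !eqxx.
have d_neq0 : d != 0 by apply/eqP => d0; move: c_mod; rewrite c_eq d0 mul0r.
have /andP [uv_off_axis uv_off_mirror] :=
  prime_1mod3_eis_norm_off_lines p_prime p_mod3 uv_norm.
rewrite on_mirrorZ; last by apply/eqP => e0; move: e_sqr; rewrite e0 mul0r.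
rewrite on_mirrorZ // on_mirror_mul3.
by apply: contraNN uv_off_axis => /on_axis_sqr; rewrite (negbTE uv_off_mirror) orbF.
Qed.

Lemma at_most_three_reps_3sqr (M : int) (v : int * int) :
  eis_rep M v -> at_most_three_reps M ->
  exists c, [/\ (c %% 3)%Z = 2, M = 3 * (c * c) & mod3_eq2.-nat `|c|%N].
Proof.
move=> v_rep few; have v_mirror := at_most_three_reps_on_mirror few v_rep.
have [c [c_mod M_eq _]] := on_mirror_eis_rep v_rep v_mirror.
exists c; split=> //; apply/pnatP => [|p p_prime p_dvd]; first by rewrite absz_gt0; lia.
have p_neq3 : p != 3%N by apply: contraTneq p_dvd => ->; apply/negP; lia.
have p_nmod1 : (p %% 3 != 1)%N.
  apply/eqP => p_mod3; rewrite M_eq in few.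
  have [w w_rep /negP] := eis_rep_3sqr_off_mirror c_mod p_prime p_mod3 p_dvd.
  by apply; apply: at_most_three_reps_on_mirror few w_rep.
have p_ndvd3 : ~~ (3 %| p)%N by rewrite dvdn_prime2 // eq_sym.
by rewrite inE; lia.
Qed.

(** * The lattice E1 *)

Lemma dotC (R : realType) (u v : R * R) : dot u v = dot v u.
Proof. by rewrite /dot mulrC [u.2 * _]mulrC. Qed.

Lemma Nsq_ge0 (R : realType) (x : R * R) : 0 <= Nsq x.
Proof. by rewrite /Nsq /dot -!expr2 addr_ge0 ?sqr_ge0. Qed.

Lemma radius_sqrt3P (R : realType) (L : R) (c : int) : 0 <= L ->
  (L = (Num.sqrt 3)^-1 * `|c|%N%:R) <-> ((3 * (c * c))%:~R = 9 * L ^+ 2).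
Proof.
move=> L_ge0; have sqrt3_sqr : Num.sqrt (3 : R) ^+ 2 = 3 by rewrite sqr_sqrtr ?ler0n.
have -> : (3 * (c * c))%:~R = 3 * `|c|%N%:R ^+ 2 :> R.
  by rewrite natr_absz intr_norm real_normK ?num_real // intrM expr2 intrM.
split=> [-> | L_sqr].
  by rewrite exprMn exprVn sqrt3_sqr; field.
have nine_neq0 : (9 : R) != 0 by rewrite pnatr_eq0.
apply/eqP; rewrite -(eqrXn2 (isT : (0 < 2)%N)) ?mulr_ge0 ?invr_ge0 ?sqrtr_ge0 ?ler0n //.
rewrite exprMn exprVn sqrt3_sqr -[L ^+ 2](mulKf nine_neq0) -L_sqr.
by apply/eqP; field.
Qed.

Section EisensteinLattice.
Variable R : realType.
Variables P1 P2 : R * R.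
Hypotheses (P1_unit : dot P1 P1 = 1) (P2_unit : dot P2 P2 = 1).
Hypothesis P1P2 : dot P1 P2 = 1 / 2.

Definition lincomb (a b : R) : R * R := vadd (vscale a P1) (vscale b P2).

Lemma dot_lincomb (a b : R) (w : R * R) :
  dot (lincomb a b) w = a * dot P1 w + b * dot P2 w.
Proof. by rewrite /dot /=; ring. Qed.

Lemma lincomb_inj (a b a' b' : R) : lincomb a b = lincomb a' b' -> a = a' /\ b = b'.
Proof.
move=> ab_eq; have := congr1 (fun w => dot w P1) ab_eq.
have := congr1 (fun w => dot w P2) ab_eq.
by rewrite /= !dot_lincomb (dotC P2 P1) P1_unit P2_unit P1P2 => e2 e1; split; lra.
Qed.

Lemma Nsq_lincomb (a b : R) : Nsq (lincomb a b) = a * a + a * b + b * b.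
Proof.
transitivity (a * a * dot P1 P1 + 2 * a * b * dot P1 P2 + b * b * dot P2 P2).
  by rewrite /Nsq /dot /=; ring.
by rewrite P1_unit P2_unit P1P2; field.
Qed.

Definition lattice_pt (v : int * int) : R * R := lincomb (v.1%:~R / 3) (v.2%:~R / 3).

Lemma lattice_pt_inj : injective lattice_pt.
Proof.
move=> [a b] [a' b'] /lincomb_inj [/= ab_eq1 ab_eq2].
have div3K (k : int) : k%:~R / 3 * 3 = k%:~R :> R by rewrite divfK ?pnatr_eq0.
by congr pair; apply: (@intr_inj R); rewrite -div3K ?ab_eq1 ?ab_eq2 div3K.
Qed.

Lemma Nsq_lattice_pt (v : int * int) :
  Nsq (lattice_pt v) = (eis_norm v.1 v.2)%:~R / 9.
Proof. by rewrite Nsq_lincomb eis_norm_intr; field. Qed.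

Lemma E1_pointE (n m : int) :
  vadd (vadd (vscale n%:~R P1) (vscale m%:~R P2)) (phi1 P1 P2)
  = lattice_pt (3 * n - 1, 3 * m - 1).
Proof.
by rewrite /lattice_pt /lincomb /phi1 /vadd /vscale /= !intrB !intrM; congr pair; field.
Qed.

Lemma inE1P (x : R * R) : inE1 P1 P2 x <->
  exists v : int * int, [/\ (v.1 %% 3)%Z = 2, (v.2 %% 3)%Z = 2 & x = lattice_pt v].
Proof.
split=> [[n [m ->]] | [[a b] [/= a_mod b_mod ->]]].
  by exists (3 * n - 1, 3 * m - 1); rewrite E1_pointE; split=> //=; lia.
exists ((a + 1) %/ 3)%Z, ((b + 1) %/ 3)%Z; rewrite E1_pointE.
by congr (lattice_pt (_, _)); lia.
Qed.

Lemma E1_circleP (L : R) (M : int) (x : R * R) :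
  0 <= L -> M%:~R = 9 * L ^+ 2 ->
  (inE1 P1 P2 x /\ Num.sqrt (Nsq x) = L) <-> exists2 v, eis_rep M v & x = lattice_pt v.
Proof.
move=> L_ge0 ML; split=> [[/inE1P [v [v1_mod v2_mod ->]] vL] | [v v_rep ->]].
  exists v => //; rewrite /eis_rep v1_mod v2_mod !eqxx /=; apply/eqP/(@intr_inj R).
  by rewrite ML -vL sqr_sqrtr ?Nsq_ge0 // Nsq_lattice_pt; field.
case/and3P: v_rep => /eqP v1_mod /eqP v2_mod /eqP v_norm.
split; first by apply/inE1P; exists v.
by rewrite Nsq_lattice_pt v_norm ML [9 * _]mulrC mulfK ?pnatr_eq0 // sqrtr_sqr ger0_norm.
Qed.

Lemma E1_circle_in3_radius (L : R) (a b c : R * R) :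
  (forall x, inE1 P1 P2 x /\ Num.sqrt (Nsq x) = L <-> x = a \/ x = b \/ x = c) ->
  exists2 n, mod3_eq2.-nat n & L = (Num.sqrt 3)^-1 * n%:R.
Proof.
move=> circleP.
have [/inE1P [v [v1_mod v2_mod a_eq]] aL] := (circleP a).2 (or_introl erefl).
have L_ge0 : 0 <= L by rewrite -aL sqrtr_ge0.
have ML : (eis_norm v.1 v.2)%:~R = 9 * L ^+ 2.
  by rewrite -aL sqr_sqrtr ?Nsq_ge0 // a_eq Nsq_lattice_pt; field.
have v_rep : eis_rep (eis_norm v.1 v.2) v by rewrite /eis_rep v1_mod v2_mod !eqxx.
have few : at_most_three_reps (eis_norm v.1 v.2).
  move=> s; rewrite -(map_inj_uniq lattice_pt_inj) => s_uniq /allP s_rep.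
  have s_abc : {subset map lattice_pt s <= [:: a; b; c]}.
    move=> _ /mapP [w /s_rep w_rep ->].
    have /circleP : inE1 P1 P2 (lattice_pt w) /\ Num.sqrt (Nsq (lattice_pt w)) = L.
      by apply/(E1_circleP _ L_ge0 ML); exists w.
    by rewrite !inE => [[|[|]] ->]; rewrite eqxx ?orbT.
  by have := uniq_leq_size s_uniq s_abc; rewrite size_map.
have [c' [_ M_eq c'_pnat]] := at_most_three_reps_3sqr v_rep few.
by exists `|c'|%N => //; apply/radius_sqrt3P => //; rewrite -M_eq.
Qed.

Lemma E1_circle_radius_three_points (n : nat) : mod3_eq2.-nat n ->
  exists a b c : R * R, [/\ a <> b, a <> c & b <> c] /\
    forall x, inE1 P1 P2 x /\ Num.sqrt (Nsq x) = (Num.sqrt 3)^-1 * n%:R <->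
              x = a \/ x = b \/ x = c.
Proof.
move=> n_pnat; set L := _ * _.
have [c [c_mod c_abs]] := mod3_eq2_pnat_signed n_pnat.
have L_ge0 : 0 <= L by rewrite mulr_ge0 ?invr_ge0 ?sqrtr_ge0 ?ler0n.
have ML : (3 * (c * c))%:~R = 9 * L ^+ 2 by apply/radius_sqrt3P; rewrite ?c_abs.
have c_pnat : mod3_eq2.-nat `|c|%N by rewrite c_abs.
exists (lattice_pt (c, c)), (lattice_pt (c, -2 * c)), (lattice_pt (-2 * c, c)).
split; first by split=> /lattice_pt_inj [] => *; lia.
move=> x; split=> [/(E1_circleP _ L_ge0 ML) [v] | x_eq].
  by rewrite (eis_rep_3sqrE c_mod c_pnat) !inE => /or3P [] /eqP -> ->; tauto.
apply/(E1_circleP _ L_ge0 ML).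
by case: x_eq => [|[|]] ->; [exists (c, c) | exists (c, -2 * c) | exists (-2 * c, c)];
  rewrite // (eis_rep_3sqrE c_mod c_pnat) !inE eqxx ?orbT.
Qed.
End EisensteinLattice.

Theorem theorem3 (R : realType) (P1 P2 : R * R) :
  dot P1 P1 = 1 -> dot P2 P2 = 1 -> dot P1 P2 = 1 / 2 ->
  forall L : R, 0 < L ->
  ((exists a b c : R * R,
      [/\ a <> b, a <> c & b <> c] /\
      forall x : R * R,
        (inE1 P1 P2 x /\ Num.sqrt (Nsq x) = L) <-> (x = a \/ x = b \/ x = c))
   <->
   (exists s : seq (nat * nat),
      (forall pe, pe \in s -> prime pe.1 /\ pe.1 %% 3 = 2)%N /\
      L = (Num.sqrt 3)^-1 * \prod_(pe <- s) (pe.1)%:R ^+ pe.2)).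
Proof.
move=> P1_unit P2_unit P1P2 L _.
pose radius (x : R) := L = (Num.sqrt 3)^-1 * x.
apply: (iff_trans _ (iff_sym (exists_pfactor_seq_2mod3 radius))).
split=> [[a [b [c [_ circleP]]]] | [n n_pnat ->]].
  exact: (E1_circle_in3_radius P1_unit P2_unit P1P2 circleP).
exact: (E1_circle_radius_three_points P1_unit P2_unit P1P2 n_pnat).
Qed.
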